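(* Let $\rho_0,\rho_1,\dots,\rho_n$ be density matrices on a finite-dimensional complex Hilbert space with $\rho_j\rho_k=0$ for all $j\ne k$ in $\{0,1,\dots,n\}$. Let $p_1,\dots,p_n\ge0$ with $\sum_{j=1}^n p_j=1$, let $\epsilon\in[0,1]$, and set $\sigma_j=\epsilon\rho_0+(1-\epsilon)\rho_j$ for $j=1,\dots,n$, $\rho=\sum_{j=1}^n p_j\rho_j$ and $\sigma=\sum_{j=1}^n p_j\sigma_j=\epsilon\rho_0+(1-\epsilon)\rho$. Then for each $\mathcal{F}\in\{\mathcal{F}_1,\mathcal{F}_Q,\mathcal{F}_A\}$, $$\sum_{j=1}^n p_j\,\mathcal{F}(\rho_j,\sigma_j)=\mathcal{F}(\rho,\sigma)=1-\epsilon.$$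
   Context: A density matrix is a positive semidefinite operator of unit trace; $\sqrt{\cdot}$ is the positive semidefinite square root. $\mathcal{F}_1(\rho,\sigma)=(\operatorname{tr}\sqrt{\sqrt{\rho}\sigma\sqrt{\rho}})^2$ (Uhlmann–Jozsa fidelity); $\mathcal{F}_Q(\rho,\sigma)=\min_{0\le s\le1}\operatorname{tr}(\rho^s\sigma^{1-s})$, with powers defined by spectral calculus on the support (so $\rho^0$ is the projector onto the support of $\rho$); $\mathcal{F}_A(\rho,\sigma)=[\operatorname{tr}(\sqrt{\rho}\sqrt{\sigma})]^2$ ($A$-fidelity). *)

From HB Require Import structures.
From mathcomp Require Import all_boot all_order all_algebra.
From mathcomp Require Import sesquilinear spectral.
From mathcomp Require Import complex.
From mathcomp Require Import classical_sets reals exp.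
Set Implicit Arguments. Unset Strict Implicit. Unset Printing Implicit Defensive.
Import Order.TTheory GRing.Theory Num.Theory.
Local Open Scope ring_scope.
Local Open Scope classical_set_scope.

Section QDefs.
Variable R : realType.
Local Notation C := (R[i]).

Definition adjmx m n (A : 'M[C]_(m, n)) : 'M[C]_(n, m) := map_mx Num.conj A^T.

Definition psdmx d (A : 'M[C]_d) : Prop :=
  adjmx A = A /\ forall v : 'rV[C]_d, 0 <= (v *m A *m adjmx v) 0 0.

Definition density d (A : 'M[C]_d) : Prop := psdmx A /\ \tr A = 1.

Definition funmx d (f : C -> C) (A : 'M[C]_d) : 'M[C]_d :=
  invmx (spectralmx A) *m diag_mx (map_mx f (spectral_diag A)) *m spectralmx A.

(* positive semidefinite square root (eigenvalues of a psd matrix are real >= 0) *)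
Definition sqrtmx d (A : 'M[C]_d) : 'M[C]_d :=
  funmx (fun x : C => ((Num.sqrt (complex.Re x))%:C)%C) A.

(* A^s, s real, defined by spectral calculus on the support of A
   (eigenvalue 0 is sent to 0, so A^0 is the support projector) *)
Definition powmx d (A : 'M[C]_d) (s : R) : 'M[C]_d :=
  funmx (fun x : C => if 0 < complex.Re x then (((complex.Re x) `^ s)%:C)%C else 0) A.

Definition F1 d (rho sigma : 'M[C]_d) : C :=
  (\tr (sqrtmx (sqrtmx rho *m sigma *m sqrtmx rho))) ^+ 2.

(* F_Q(rho, sigma) = min_{0<=s<=1} tr(rho^s sigma^(1-s)); the trace is real
   for psd arguments, and the minimum is written as the infimum (it is attained). *)
Definition FQ d (rho sigma : 'M[C]_d) : C :=
  ((inf [set complex.Re (\tr (powmx rho s *m powmx sigma (1 - s))) | s in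
        [set s : R | 0 <= s <= 1]])%:C)%C.

Definition FA d (rho sigma : 'M[C]_d) : C :=
  (\tr (sqrtmx rho *m sqrtmx sigma)) ^+ 2.

End QDefs.

From mathcomp Require Import all_boot all_order all_algebra.
From mathcomp Require Import sesquilinear spectral complex.
From mathcomp Require Import classical_sets reals exp.
From mathcomp Require Import lra.
Set Implicit Arguments. Unset Strict Implicit. Unset Printing Implicit Defensive.
Import Order.TTheory GRing.Theory Num.Theory.
Local Open Scope ring_scope.

(* Because rho0 is orthogonal to every rho_j, it is orthogonal to rho, and
   sigma = eps rho0 + (1 - eps) rho by linearity.  So each pair
   (rho_j, sigma_j), and also (rho, sigma), has the shape
   (A, e B + (1 - e) A) with A a density matrix and A B = B A = 0.  For such
   a pair one polynomial interpolates a function f with f(0) = 0 on the joint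
   spectrum of A, B and e B + (1 - e) A, so the spectral calculus splits:
   f(e B + (1 - e) A) = f(e B) + f((1 - e) A).  Every product of a function of
   A with a function of B vanishes, and all three fidelities collapse to
   scalar multiples of tr A = 1: sqrt(1 - e)^2 for F_1 and F_A, and
   (1 - e)^(1 - s) >= 1 - e, with equality at s = 0, for F_Q. *)

Section ScalarFunctions.
Context {R : realType}.
Local Notation C := R[i].

Definition sqrtRe (x : C) : C := ((Num.sqrt (complex.Re x))%:C)%C.

Definition powRe (s : R) (x : C) : C :=
  if 0 < complex.Re x then (((complex.Re x) `^ s)%:C)%C else 0.

(* Unlike [powR], this sends 0 to 0 for every exponent, 0 included. *)
Definition powR_supp (c s : R) : R := if 0 < c then c `^ s else 0.

Lemma Re_realM (c : R) (x : C) : complex.Re ((c%:C)%C * x) = c * complex.Re x.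
Proof. by case: x => a b; rewrite /= mul0r subr0. Qed.

Lemma ge0_complexE (x : C) : 0 <= x -> x = ((complex.Re x)%:C)%C /\ 0 <= complex.Re x.
Proof. by case: x => a b; rewrite lecE /= => /andP[/eqP-> ->]. Qed.

Lemma sqrtRe0 : sqrtRe 0 = 0.
Proof. by rewrite /sqrtRe sqrtr0. Qed.

Lemma mul_sqrtRe (x : C) : 0 <= x -> sqrtRe x * sqrtRe x = x.
Proof.
move=> /ge0_complexE[xE x0]; rewrite [RHS]xE /sqrtRe.
by rewrite -rmorphM -expr2 sqr_sqrtr.
Qed.

Lemma sqrtRe_sqr (x : C) : 0 <= x -> sqrtRe (x * x) = x.
Proof.
move=> /ge0_complexE[xE x0]; rewrite [in RHS]xE [in LHS]xE.
by rewrite /sqrtRe Re_realM -expr2 sqrtr_sqr ger0_norm.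
Qed.

Lemma sqrtReZ (c : R) (x : C) : 0 <= c ->
  sqrtRe ((c%:C)%C * x) = ((Num.sqrt c)%:C)%C * sqrtRe x.
Proof. by move=> c0; rewrite /sqrtRe Re_realM sqrtrM // rmorphM. Qed.

Lemma powRe0 (s : R) : powRe s 0 = 0.
Proof. by rewrite /powRe ltxx. Qed.

Lemma powReZ (c s : R) (x : C) : 0 <= c ->
  powRe s ((c%:C)%C * x) = ((powR_supp c s)%:C)%C * powRe s x.
Proof.
rewrite le_eqVlt => /predU1P[<- | c_gt0].
  by rewrite /powRe /powR_supp Re_realM mul0r ltxx rmorph0 mul0r.
rewrite /powRe /powR_supp Re_realM pmulr_rgt0 // c_gt0.
by case: ifP => [x_gt0 | _]; rewrite ?mulr0 // powRM ?rmorphM // ltW.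
Qed.

Lemma mul_powRe_subr (s : R) (x : C) : 0 <= x -> powRe s x * powRe (1 - s) x = x.
Proof.
move=> /ge0_complexE[xE x0]; rewrite /powRe; case: ifPn => [x_gt0 | x_le0].
  rewrite -rmorphM -powRD; last by apply/implyP => _; rewrite gt_eqF.
  by rewrite addrC subrK powRr1 // -xE.
have Rex0 : complex.Re x = 0 by apply/le_anti; rewrite x0 leNgt x_le0.
by rewrite mul0r xE Rex0.
Qed.

Lemma inf_powR_supp (a : R) : 0 <= a <= 1 ->
  inf [set powR_supp a (1 - s) | s in [set s : R | 0 <= s <= 1]]%classic = a.
Proof.
move=> /andP[a0 a1].
set E := ([set powR_supp a (1 - s) | s in _])%classic.
have Ea : E a.
  exists 0; first by rewrite /= lexx ler01.
  rewrite /powR_supp subr0 powRr1 //; case: ifPn => // a_le0.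
  by apply/le_anti; rewrite a0 leNgt a_le0.
have lbE : lbound E a.
  move=> _ [s /andP[s0 s1] <-]; rewrite /powR_supp; case: ifPn => [a_gt0 | a_le0].
    by apply: ger1_powR; [rewrite a_gt0 a1 | lra].
  by rewrite leNgt.
apply/le_anti/andP; split; first by apply: ge_inf => //; exists a.
by apply: lb_le_inf => //; exists a.
Qed.

Lemma sqrtmxE d (A : 'M[C]_d) : sqrtmx A = funmx sqrtRe A.
Proof. by []. Qed.

Lemma powmxE d (A : 'M[C]_d) s : powmx A s = funmx (powRe s) A.
Proof. by []. Qed.

End ScalarFunctions.

Section Adjoint.
Variables (R : realType) (d : nat).
Local Notation C := R[i].
Local Notation M := 'M[C]_d.

Lemma adjmx0 : adjmx (0 : M) = 0.
Proof. by apply/matrixP => i j; rewrite !mxE rmorph0. Qed.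

Lemma adjmxD (A B : M) : adjmx (A + B) = adjmx A + adjmx B.
Proof. by apply/matrixP => i j; rewrite !mxE rmorphD. Qed.

Lemma adjmx_sum I (r : seq I) (P : pred I) (F : I -> M) :
  adjmx (\sum_(i <- r | P i) F i) = \sum_(i <- r | P i) adjmx (F i).
Proof. exact: (big_morph _ adjmxD adjmx0). Qed.

Lemma adjmxZ (c : R) (A : M) : adjmx ((c%:C)%C *: A) = (c%:C)%C *: adjmx A.
Proof. by apply/matrixP => i j; rewrite !mxE rmorphM; congr (_ * _); apply: conjc_real. Qed.

Lemma adjmxM (A B : M) : adjmx (A *m B) = adjmx B *m adjmx A.
Proof. by rewrite /adjmx trmx_mul map_mxM. Qed.

Lemma herm_normalmx (A : M) : adjmx A = A -> A \is normalmx.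
Proof. by move=> A_herm; apply/normalmxP; rewrite [(A ^t Num.conj)%sesqui]A_herm. Qed.

End Adjoint.

Section SpectralCalculus.
Variables (R : realType) (n : nat).
Local Notation C := R[i].
Local Notation M := 'M[C]_n.+1.

Lemma exists_interp_poly (s : seq C) (f : C -> C) :
  exists q : {poly C}, {in s, forall x, q.[x] = f x}.
Proof.
elim: s => [|a s [q q_f]]; first by exists 0.
have [a_s | a_s] := boolP (a \in s).
  by exists q => x; rewrite inE => /predU1P[-> |]; apply: q_f.
pose w := \prod_(b <- s) ('X - b%:P).
have w_s x : x \in s -> w.[x] = 0.
  by move=> x_s; apply/eqP; rewrite -/(root w x) root_prod_XsubC.
have w_a : w.[a] != 0 by rewrite -/(root w a) root_prod_XsubC.
exists (q + ((f a - q.[a]) / w.[a]) *: w) => x.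
rewrite inE hornerD hornerZ => /predU1P[-> | x_s]; first by rewrite divfK // addrC subrK.
by rewrite (w_s x x_s) mulr0 addr0 q_f.
Qed.

Lemma eq_in_map_rV m (D : 'rV[C]_m) (f g : C -> C) :
  {in codom (D 0), f =1 g} -> map_mx f D = map_mx g D.
Proof. by move=> fg; apply/matrixP => i j; rewrite !mxE ord1 fg ?codom_f. Qed.

Definition spectrum (A : M) : seq C := codom (spectral_diag A 0).

(* Results are stated through [diag_conj] and proofs generalize [spectralmx A]
   and [spectral_diag A] before closing goals: deciding by conversion that two
   different spectral expressions are (un)equal unfolds the spectral
   decomposition and is extremely slow. *)
Definition diag_conj (P : M) (D : 'rV[C]_n.+1) : M := invmx P *m diag_mx D *m P.

Lemma funmxE (A : M) f : funmx f A = diag_conj (spectralmx A) (map_mx f (spectral_diag A)).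
Proof. by rewrite /funmx /diag_conj; move: (spectralmx A) (spectral_diag A). Qed.

Lemma normalmx_diag_conj (A : M) :
  A \is normalmx -> A = diag_conj (spectralmx A) (spectral_diag A).
Proof.
move=> /orthomx_spectralP; rewrite /diag_conj.
by move: (spectralmx A) (spectral_diag A) => P D ->.
Qed.

Lemma horner_mx_diag_conj (P : M) (D : 'rV[C]_n.+1) (q : {poly C}) : P \in unitmx ->
  horner_mx (diag_conj P D) q = diag_conj P (map_mx (horner q) D).
Proof.
move=> P_unit; rewrite /diag_conj horner_mx_uconjC; last exact: P_unit.
by rewrite horner_mx_diag.
Qed.

Lemma mulmx_diag_conj (P : M) (D E : 'rV[C]_n.+1) : P \in unitmx ->
  diag_conj P D *m diag_conj P E = diag_conj P (\row_j (D 0 j * E 0 j)).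
Proof.
move=> P_unit; rewrite /diag_conj !mulmxA (mulmxK P_unit).
by rewrite -(mulmxA _ (diag_mx D)) mulmx_diag.
Qed.

Lemma scale_diag_conj (P : M) (D : 'rV[C]_n.+1) (c : C) :
  c *: diag_conj P D = diag_conj P (c *: D).
Proof.
rewrite /diag_conj scalemxAl scalemxAr.
suff -> : c *: diag_mx D = diag_mx (c *: D) by [].
by apply/matrixP => i j; rewrite !mxE mulrnAr.
Qed.

Lemma funmx_horner (A : M) f (q : {poly C}) : A \is normalmx ->
  {in spectrum A, horner q =1 f} -> funmx f A = horner_mx A q.
Proof.
move=> nA q_f; rewrite funmxE [in RHS](normalmx_diag_conj nA).
by rewrite (horner_mx_diag_conj _ _ (spectral_unit A)) (eq_in_map_rV q_f).
Qed.

Lemma funmx_diag_conj (A P : M) (D : 'rV[C]_n.+1) f :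
  A \is normalmx -> P \in unitmx -> A = diag_conj P D ->
  funmx f A = diag_conj P (map_mx f D).
Proof.
move=> nA P_unit A_def.
have [q q_f] := exists_interp_poly (spectrum A ++ codom (D 0)) f.
rewrite (funmx_horner (q := q) nA) => [|x xA]; last by rewrite q_f // mem_cat xA.
have q_D : {in codom (D 0), horner q =1 f}.
  by move=> x xD; rewrite q_f // mem_cat xD orbT.
by rewrite {}A_def (horner_mx_diag_conj _ _ P_unit) (eq_in_map_rV q_D).
Qed.

Lemma eq_funmx (A : M) f g : {in spectrum A, f =1 g} -> funmx f A = funmx g A.
Proof. by move=> fg; rewrite !funmxE (eq_in_map_rV fg). Qed.

Lemma funmx_id (A : M) : A \is normalmx -> funmx id A = A.
Proof. by move=> nA; rewrite funmxE map_mx_id -?normalmx_diag_conj. Qed.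

Lemma funmx_mul (A : M) f g : funmx f A *m funmx g A = funmx (fun x => f x * g x) A.
Proof.
rewrite !funmxE (mulmx_diag_conj _ _ (spectral_unit A)).
suff -> : \row_j (map_mx f (spectral_diag A) 0 j * map_mx g (spectral_diag A) 0 j)
          = map_mx (fun x => f x * g x) (spectral_diag A) by [].
by apply/matrixP => i j; rewrite !mxE ord1.
Qed.

Lemma funmxZ (A : M) (c : C) f : funmx (fun x => c * f x) A = c *: funmx f A.
Proof.
rewrite !funmxE scale_diag_conj.
suff -> : c *: map_mx f (spectral_diag A) = map_mx (fun x => c * f x) (spectral_diag A) by [].
by apply/matrixP => i j; rewrite !mxE.
Qed.

Lemma funmx_comp (A : M) f g : funmx g A \is normalmx ->
  funmx f (funmx g A) = funmx (f \o g) A.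
Proof.
move=> ng; rewrite (funmx_diag_conj f ng (spectral_unit A) (funmxE A g)).
by rewrite funmxE map_mx_comp.
Qed.

Lemma funmx_scalemx (A : M) (c k : C) f : A \is normalmx -> c *: A \is normalmx ->
  (forall x, f (c * x) = k * f x) -> funmx f (c *: A) = k *: funmx f A.
Proof.
move=> nA ncA f_homo.
rewrite (funmx_diag_conj (D := c *: spectral_diag A) f ncA (spectral_unit A)); last first.
  by rewrite {1}(normalmx_diag_conj nA) scale_diag_conj.
rewrite -funmxZ funmxE.
suff -> : map_mx f (c *: spectral_diag A) = map_mx (fun x => k * f x) (spectral_diag A) by [].
by apply/matrixP => i j; rewrite !mxE f_homo.
Qed.

Lemma horner_mx_mulmx_orth (A B : M) p : A *m B = 0 -> horner_mx A p *m B = p.[0] *: B.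
Proof.
move=> AB; elim/poly_ind: p => [|p c _]; first by rewrite rmorph0 mul0mx horner0 scale0r.
rewrite rmorphD rmorphM /= horner_mx_X horner_mx_C hornerMXaddC mulr0 add0r.
by rewrite mulmxDl -mulmxE -mulmxA AB mulmx0 add0r mul_scalar_mx.
Qed.

Lemma mulmx_horner_mx_orth (A B : M) p : B *m A = 0 -> B *m horner_mx A p = p.[0] *: B.
Proof.
move=> BA; elim/poly_ind: p => [|p c _]; first by rewrite rmorph0 mulmx0 horner0 scale0r.
rewrite hornerMXaddC mulr0 add0r [p * 'X]mulrC rmorphD rmorphM /= horner_mx_X horner_mx_C.
by rewrite mulmxDr -mulmxE mulmxA BA mul0mx add0r mul_mx_scalar.
Qed.

Lemma horner_mxD_orth (A B : M) p : A *m B = 0 -> B *m A = 0 ->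
  horner_mx (A + B) p + p.[0]%:M = horner_mx A p + horner_mx B p.
Proof.
move=> AB BA; elim/poly_ind: p => [|p c IHp].
  by rewrite !rmorph0 horner0 raddf0 !addr0.
rewrite !rmorphD !rmorphM /= !horner_mx_X !horner_mx_C hornerMXaddC mulr0 add0r.
have -> : horner_mx (A + B) p * (A + B) = horner_mx A p * A + horner_mx B p * B.
  rewrite -[horner_mx (A + B) p](addrK p.[0]%:M) IHp -!mulmxE !mulmxDl !mulmxDr.
  rewrite (horner_mx_mulmx_orth _ AB) (horner_mx_mulmx_orth _ BA).
  rewrite !mulNmx !mul_scalar_mx [- _ + - _]addrC -opprD [_ *: A + _]addrC.
  by rewrite addrACA addrK.
by rewrite addrACA addrA.
Qed.

Lemma funmx_mulmx_orth (A B : M) f : A \is normalmx -> A *m B = 0 -> f 0 = 0 ->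
  funmx f A *m B = 0.
Proof.
move=> nA AB f0; have [q q_f] := exists_interp_poly (0 :: spectrum A) f.
rewrite (funmx_horner (q := q) nA) => [|x xA]; last by rewrite q_f // inE xA orbT.
by rewrite horner_mx_mulmx_orth // q_f ?mem_head // f0 scale0r.
Qed.

Lemma mulmx_funmx_orth (A B : M) f : A \is normalmx -> B *m A = 0 -> f 0 = 0 ->
  B *m funmx f A = 0.
Proof.
move=> nA BA f0; have [q q_f] := exists_interp_poly (0 :: spectrum A) f.
rewrite (funmx_horner (q := q) nA) => [|x xA]; last by rewrite q_f // inE xA orbT.
by rewrite mulmx_horner_mx_orth // q_f ?mem_head // f0 scale0r.
Qed.

Lemma funmxD_orth (A B : M) f :
  A \is normalmx -> B \is normalmx -> A + B \is normalmx ->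
  A *m B = 0 -> B *m A = 0 -> f 0 = 0 ->
  funmx f (A + B) = funmx f A + funmx f B.
Proof.
move=> nA nB nAB AB BA f0.
have [q q_f] := exists_interp_poly [:: 0 & spectrum (A + B) ++ spectrum A ++ spectrum B] f.
have q_on X : {subset spectrum X <= spectrum (A + B) ++ spectrum A ++ spectrum B} ->
    {in spectrum X, forall x, q.[x] = f x}.
  by move=> sub x xX; rewrite q_f // inE sub ?orbT.
rewrite (funmx_horner nAB (q_on _ _)) => [|x]; last by rewrite mem_cat => ->.
rewrite (funmx_horner nA (q_on _ _)) => [|x]; last by rewrite !mem_cat => ->; rewrite orbT.
rewrite (funmx_horner nB (q_on _ _)) => [|x]; last by rewrite !mem_cat => ->; rewrite !orbT.
by rewrite -horner_mxD_orth // q_f ?mem_head // f0 raddf0 addr0.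
Qed.

Lemma psdmx_spectrum_ge0 (A : M) : psdmx A -> {in spectrum A, forall x, 0 <= x}.
Proof.
case=> A_herm A_ge0 _ /codomP[i ->].
have := normalmx_diag_conj (herm_normalmx A_herm).
have := spectral_unitarymx A.
move: (spectralmx A) (spectral_diag A) => P D P_unitary.
have := A_ge0 (row i P).
have -> : (row i P *m A *m adjmx (row i P)) 0 0 = (P *m A *m adjmx P) i i.
  by rewrite -row_mul !mxE; apply: eq_bigr => k _; rewrite !mxE.
move=> PAP_ge0 A_def; have P_unit := unitarymx_unit P_unitary.
suff <- : (P *m A *m adjmx P) i i = D 0 i by [].
rewrite /adjmx -(invmx_unitary P_unitary) A_def /diag_conj !mulmxA.
by rewrite (mulmxV P_unit) mul1mx (mulmxK P_unit) mxE eqxx mulr1n.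
Qed.

End SpectralCalculus.

Section OrthogonalMixture.
Variables (R : realType) (n : nat).
Local Notation C := R[i].
Local Notation M := 'M[C]_n.+1.
Variables (A B : M) (e : R).
Hypotheses (A_psd : psdmx A) (trA : \tr A = 1) (B_herm : adjmx B = B).
Hypotheses (AB : A *m B = 0) (BA : B *m A = 0) (e_ge0 : 0 <= e) (e_le1 : e <= 1).

Let a := 1 - e.
Let a_ge0 : 0 <= a. Proof. by rewrite subr_ge0. Qed.
Let eB := (e%:C)%C *: B.
Let aA := (a%:C)%C *: A.

Let A_herm : adjmx A = A. Proof. by case: A_psd. Qed.
Let nA : A \is normalmx. Proof. exact: herm_normalmx. Qed.
Let nB : B \is normalmx. Proof. exact: herm_normalmx. Qed.
Let neB : eB \is normalmx. Proof. by apply: herm_normalmx; rewrite adjmxZ B_herm. Qed.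
Let naA : aA \is normalmx. Proof. by apply: herm_normalmx; rewrite adjmxZ A_herm. Qed.
Let nS : eB + aA \is normalmx.
Proof. by apply: herm_normalmx; rewrite adjmxD !adjmxZ B_herm A_herm. Qed.

Let eB_aA : eB *m aA = 0. Proof. by rewrite -scalemxAl -scalemxAr BA !scaler0. Qed.
Let aA_eB : aA *m eB = 0. Proof. by rewrite -scalemxAl -scalemxAr AB !scaler0. Qed.

Let funmx_mix f (k : R -> R) : f 0 = 0 ->
  (forall (c : R) x, 0 <= c -> f ((c%:C)%C * x) = ((k c)%:C)%C * f x) ->
  funmx f (eB + aA) = ((k e)%:C)%C *: funmx f B + ((k a)%:C)%C *: funmx f A.
Proof.
move=> f0 f_homo; rewrite (funmxD_orth neB naA nS eB_aA aA_eB f0).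
rewrite (funmx_scalemx nB neB (fun x => f_homo e x e_ge0)).
by rewrite (funmx_scalemx nA naA (fun x => f_homo a x a_ge0)).
Qed.

Let funmx_orth f g : f 0 = 0 -> g 0 = 0 -> funmx f A *m funmx g B = 0.
Proof.
move=> f0 g0; apply: (mulmx_funmx_orth nB _ g0).
exact: (funmx_mulmx_orth nA AB f0).
Qed.

Let funmx_factor f g : (forall x, 0 <= x -> f x * g x = x) -> funmx f A *m funmx g A = A.
Proof.
move=> fg; rewrite funmx_mul -[RHS](funmx_id nA); apply: eq_funmx => x xA.
exact/fg/(psdmx_spectrum_ge0 A_psd).
Qed.

Let sqrt_mix : funmx sqrtRe (eB + aA)
  = ((Num.sqrt e)%:C)%C *: funmx sqrtRe B + ((Num.sqrt a)%:C)%C *: funmx sqrtRe A.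
Proof. by apply: (funmx_mix (k := Num.sqrt)); [exact: sqrtRe0 | move=> c x; apply: sqrtReZ]. Qed.

Let pow_mix s : funmx (powRe s) (eB + aA)
  = ((powR_supp e s)%:C)%C *: funmx (powRe s) B + ((powR_supp a s)%:C)%C *: funmx (powRe s) A.
Proof. by apply: (funmx_mix (k := powR_supp^~ s)); [exact: powRe0 | move=> c x; apply: powReZ]. Qed.

Let funmx_mul_mix f g (x y : C) : f 0 = 0 -> g 0 = 0 -> (forall z, 0 <= z -> f z * g z = z) ->
  funmx f A *m (x *: funmx g B + y *: funmx g A) = y *: A.
Proof.
move=> f0 g0 fg; move: (funmx_orth f0 g0) (funmx_factor fg).
move: (funmx f A) (funmx g B) (funmx g A) => fA gB gA fA_gB fA_gA.
by rewrite mulmxDr -!scalemxAr fA_gB fA_gA scaler0 add0r.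
Qed.

Let sqrC_sqrt (c : R) : 0 <= c -> (((Num.sqrt c)%:C)%C * 1) ^+ 2 = (c%:C)%C.
Proof. by move=> c0; rewrite mulr1 -rmorphXn /= sqr_sqrtr. Qed.

Lemma FA_orth_mix : FA A (eB + aA) = (a%:C)%C.
Proof.
rewrite /FA !sqrtmxE sqrt_mix (funmx_mul_mix _ _ sqrtRe0 sqrtRe0 mul_sqrtRe).
by rewrite mxtraceZ trA sqrC_sqrt.
Qed.

Lemma FQ_orth_mix : FQ A (eB + aA) = (a%:C)%C.
Proof.
rewrite /FQ; set E := ([set _ | s in _])%classic.
suff -> : E = ([set powR_supp a (1 - s) | s in [set s : R | 0 <= s <= 1]])%classic.
  by rewrite inf_powR_supp // a_ge0 lerBlDr lerDl.
apply: eq_imagel => s _; rewrite !powmxE pow_mix.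
rewrite (funmx_mul_mix _ _ (powRe0 s) (powRe0 (1 - s)) (mul_powRe_subr s)).
by rewrite mxtraceZ trA mulr1.
Qed.

Lemma F1_orth_mix : F1 A (eB + aA) = (a%:C)%C.
Proof.
have sqrE : funmx (fun x => x * x) A = A *m A by rewrite -funmx_mul funmx_id.
have n_sqr : funmx (fun x => x * x) A \is normalmx.
  by rewrite sqrE; apply: herm_normalmx; rewrite adjmxM A_herm.
have n_asqr : (a%:C)%C *: funmx (fun x => x * x) A \is normalmx.
  by rewrite sqrE; apply: herm_normalmx; rewrite adjmxZ adjmxM A_herm.
have sqrtA_A : funmx sqrtRe A *m A *m funmx sqrtRe A = funmx (fun x => x * x) A.
  rewrite -{2}(funmx_id nA) !funmx_mul; apply: eq_funmx => x xA /=.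
  by rewrite mulrAC mul_sqrtRe // (psdmx_spectrum_ge0 A_psd).
have inner : funmx sqrtRe A *m (eB + aA) *m funmx sqrtRe A
    = (a%:C)%C *: funmx (fun x => x * x) A.
  move: (funmx_mulmx_orth nA AB sqrtRe0) sqrtA_A.
  move: (funmx sqrtRe A) (funmx (fun x => x * x) A) => S A2 SB SAS.
  by rewrite mulmxDr mulmxDl -!scalemxAr -!scalemxAl SB mul0mx scaler0 add0r SAS.
rewrite /F1 !sqrtmxE inner (funmx_scalemx n_sqr n_asqr (fun x => sqrtReZ x a_ge0)).
rewrite (funmx_comp _ n_sqr) (@eq_funmx _ _ _ _ id); last first.
  by move=> x /(psdmx_spectrum_ge0 A_psd) x0; apply: sqrtRe_sqr.
by rewrite (funmx_id nA) mxtraceZ trA sqrC_sqrt.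
Qed.

Lemma fidelity_orth_mix F : F = @F1 R n.+1 \/ F = @FQ R n.+1 \/ F = @FA R n.+1 ->
  F A (eB + aA) = (a%:C)%C.
Proof. by case=> [-> | [-> | ->]]; [exact: F1_orth_mix | exact: FQ_orth_mix | exact: FA_orth_mix]. Qed.

End OrthogonalMixture.

Lemma density_dim0 (R : realType) (A : 'M[R[i]]_0) : ~ density A.
Proof. by case=> _; rewrite /mxtrace big_ord0 => /eqP; rewrite eq_sym oner_eq0. Qed.

Lemma density_convex (R : realType) d I (r : seq I) (p : I -> R) (A : I -> 'M[R[i]]_d) :
  (forall i, 0 <= p i) -> \sum_(i <- r) p i = 1 -> (forall i, density (A i)) ->
  density (\sum_(i <- r) ((p i)%:C)%C *: A i).
Proof.
move=> p_ge0 p_sum1 A_dens; split; first split.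
- rewrite adjmx_sum; apply: eq_bigr => i _.
  by rewrite adjmxZ; case: (A_dens i) => [[->]].
- move=> v; rewrite mulmx_sumr mulmx_suml summxE sumr_ge0 // => i _.
  rewrite -scalemxAr -scalemxAl mxE mulr_ge0 ?lecR //.
  by case: (A_dens i) => [[_ ->]].
rewrite raddf_sum /= (eq_bigr (fun i => ((p i)%:C)%C)) => [|i _].
  by rewrite -rmorph_sum p_sum1.
by rewrite mxtraceZ; case: (A_dens i) => _ ->; rewrite mulr1.
Qed.

Lemma sum_scale_mix (K : comPzRingType) (V : lmodType K) I (r : seq I) (p : I -> K)
    (x y : K) (b : V) (a : I -> V) :
  \sum_(i <- r) p i = 1 ->
  \sum_(i <- r) p i *: (x *: b + y *: a i) = x *: b + y *: \sum_(i <- r) p i *: a i.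
Proof.
move=> p_sum1; under eq_bigr => i _ do rewrite scalerDr.
rewrite big_split /= -scaler_suml p_sum1 scale1r scaler_sumr.
by congr (_ + _); apply: eq_bigr => i _; rewrite !scalerA mulrC.
Qed.

Theorem mainTheorem9 (R : realType) (d n : nat)
  (rho0 : 'M[R[i]]_d) (rhos : 'I_n -> 'M[R[i]]_d) (p : 'I_n -> R) (eps : R) :
  density rho0 -> (forall j, density (rhos j)) ->
  (forall j, rho0 *m rhos j = 0) -> (forall j, rhos j *m rho0 = 0) ->
  (forall j k, j != k -> rhos j *m rhos k = 0) ->
  (forall j, 0 <= p j) -> \sum_(j < n) p j = 1 ->
  0 <= eps <= 1 ->
  let sigmas := fun j => eps%:C%C *: rho0 + (1 - eps)%:C%C *: rhos j in
  let rho := \sum_(j < n) (p j)%:C%C *: rhos j in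
  let sigma := \sum_(j < n) (p j)%:C%C *: sigmas j in
  forall F : 'M[R[i]]_d -> 'M[R[i]]_d -> R[i],
    F = @F1 R d \/ F = @FQ R d \/ F = @FA R d ->
    \sum_(j < n) (p j)%:C%C * F (rhos j) (sigmas j) = F rho sigma /\
    F rho sigma = (1 - eps)%:C%C.
Proof.
case: d rho0 rhos => [|d] rho0 rhos rho0_dens; first by case: (density_dim0 rho0_dens).
(* The rho_j need not be mutually orthogonal: only their orthogonality to rho0 is used. *)
move=> rhos_dens rho0_rhos rhos_rho0 _ p_ge0 p_sum1 /andP[eps_ge0 eps_le1].
move=> sigmas rho sigma F F_fid.
have [[rho0_herm _] _] := rho0_dens.
have F_mix X : density X -> X *m rho0 = 0 -> rho0 *m X = 0 ->
    F X (eps%:C%C *: rho0 + (1 - eps)%:C%C *: X) = (1 - eps)%:C%C.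
  by case=> X_psd trX X_rho0 rho0_X; apply: fidelity_orth_mix.
have rho_rho0 : rho *m rho0 = 0.
  by rewrite mulmx_suml big1 // => j _; rewrite -scalemxAl rhos_rho0 scaler0.
have rho0_rho : rho0 *m rho = 0.
  by rewrite mulmx_sumr big1 // => j _; rewrite -scalemxAr rho0_rhos scaler0.
have sigmaE : sigma = eps%:C%C *: rho0 + (1 - eps)%:C%C *: rho.
  by rewrite /sigma /sigmas sum_scale_mix // -rmorph_sum p_sum1.
rewrite sigmaE F_mix //; last exact: density_convex.
split=> //; rewrite (eq_bigr (fun j => (p j)%:C%C * (1 - eps)%:C%C)) => [|j _].
  by rewrite -mulr_suml -rmorph_sum p_sum1 mul1r.
by rewrite F_mix.
Qed.
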